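(* Let $X$ be a set, $B=(B,+,0)$ a unitary magma and $(A,k,q,s,p)$ a retraction point from $X$ to $B$. Define $\varphi\colon X\times B\times X\times B\to X$ by $$\varphi(x,b,x',b')=q\big((k(x)+s(b))+(k(x')+s(b'))\big).$$ Then $(X,\varphi)$ is a $B$-action.
   Context: A unitary magma is a set with a binary operation $+$ and an element $0$ with $b+0=b=0+b$ for all $b$; morphisms preserve $+$ and $0$. Given a set $X$ and a unitary magma $B$, a retraction point from $X$ to $B$ is a tuple $(A,k,q,s,p)$ where $A=(A,+,0)$ is a unitary magma, $k\colon X\to A$ and $q\colon A\to X$ are maps, $s\colon B\to A$ and $p\colon A\to B$ are morphisms of unitary magmas, and $p(s(b))=b$, $q(k(x))=x$, $p(k(x))=0$, $q(s(b))=q(0)$, and $k(q(a))+s(p(a))=a$ for all $x\in X$, $b\in B$, $a\in A$. A $B$-action is a pair $(X,\varphi)$ with $X$ a set and $\varphi\colon X\times B\times X\times B\to X$ a map such that: (1) there is an element $0\in X$ with $\varphi(x,0,0,0)=x=\varphi(0,0,x,0)$ for all $x\in X$; (2) $\varphi(x,b,0,0)=\varphi(x,0,0,b)=\varphi(0,0,x,b)$ for all $x\in X,b\in B$; (3) $\varphi(0,b,0,b')=0$ for all $b,b'\in B$; (4) writing $\varphi_{00}(x,b)=\varphi(x,0,0,b)$, for all $x,x'\in X$, $b,b'\in B$: $\varphi(x,b,x',b')=\varphi_{00}\big(\varphi(\varphi_{00}(x,b),b,\varphi_{00}(x',b'),b'),\,b+b'\big)$. *)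

Record UnitaryMagma := {
  um_car :> Type;
  um_op : um_car -> um_car -> um_car;
  um_zero : um_car;
  um_op_zero_r : forall b, um_op b um_zero = b;
  um_op_zero_l : forall b, um_op um_zero b = b
}.

Arguments um_op {_} _ _.
Arguments um_zero {_}.

Definition is_um_morphism (B A : UnitaryMagma) (f : B -> A) : Prop :=
  (forall b b' : B, f (um_op b b') = um_op (f b) (f b')) /\ f um_zero = um_zero.

Definition retraction_point (X : Type) (B A : UnitaryMagma)
  (k : X -> A) (q : A -> X) (s : B -> A) (p : A -> B) : Prop :=
  is_um_morphism B A s /\ is_um_morphism A B p /\
  (forall b : B, p (s b) = b) /\
  (forall x : X, q (k x) = x) /\
  (forall x : X, p (k x) = um_zero) /\
  (forall b : B, q (s b) = q um_zero) /\
  (forall a : A, um_op (k (q a)) (s (p a)) = a).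

(* B-action (X, phi).  Conditions (2)-(4) refer to the element 0 of X
   chosen in condition (1), so all are stated for one witness z. *)
Definition B_action (B : UnitaryMagma) (X : Type) (phi : X -> B -> X -> B -> X) : Prop :=
  exists z : X,
    (forall x : X, phi x um_zero z um_zero = x /\ phi z um_zero x um_zero = x) /\
    (forall (x : X) (b : B), phi x b z um_zero = phi x um_zero z b /\
                             phi x um_zero z b = phi z um_zero x b) /\
    (forall b b' : B, phi z b z b' = z) /\
    (forall (x x' : X) (b b' : B),
       phi x b x' b' =
       phi (phi (phi x um_zero z b) b (phi x' um_zero z b') b') um_zero z (um_op b b')).


(* The zero of X is q 0.  Every a : A splits as k (q a) + s (p a), and p (k x + s b) = b,
   so k (q (k x + s b)) + s b = k x + s b: this collapses the inner φ₀₀'s of condition (4),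
   and the outer φ₀₀(-, b + b') fixes q a for a = (k x + s b) + (k x' + s b') since p a = b + b'. *)

Section RetractionPointAction.

Variables (X : Type) (B A : UnitaryMagma).
Variables (k : X -> A) (q : A -> X) (s : B -> A) (p : A -> B).

Hypothesis s_op : forall b b' : B, s (um_op b b') = um_op (s b) (s b').
Hypothesis s_zero : s um_zero = um_zero.
Hypothesis p_op : forall a a' : A, p (um_op a a') = um_op (p a) (p a').
Hypothesis p_zero : p um_zero = um_zero.
Hypothesis p_s : forall b : B, p (s b) = b.
Hypothesis q_k : forall x : X, q (k x) = x.
Hypothesis p_k : forall x : X, p (k x) = um_zero.
Hypothesis q_s : forall b : B, q (s b) = q um_zero.
Hypothesis k_q_s_p : forall a : A, um_op (k (q a)) (s (p a)) = a.

Definition rp_action (x : X) (b : B) (x' : X) (b' : B) : X :=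
  q (um_op (um_op (k x) (s b)) (um_op (k x') (s b'))).

Lemma k_q_zero : k (q um_zero) = um_zero.
Proof.
  transitivity (um_op (k (q um_zero)) (s (p um_zero))).
  - now rewrite p_zero, s_zero, um_op_zero_r.
  - apply k_q_s_p.
Qed.

Lemma p_k_s (x : X) (b : B) : p (um_op (k x) (s b)) = b.
Proof. now rewrite p_op, p_k, p_s, um_op_zero_l. Qed.

Lemma k_q_k_s (x : X) (b : B) :
  um_op (k (q (um_op (k x) (s b)))) (s b) = um_op (k x) (s b).
Proof.
  set (a := um_op (k x) (s b)).
  transitivity (um_op (k (q a)) (s (p a))).
  - unfold a. now rewrite p_k_s.
  - apply k_q_s_p.
Qed.

Lemma rp_action_zero_l (x : X) (b : B) :
  rp_action (q um_zero) um_zero x b = q (um_op (k x) (s b)).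
Proof. unfold rp_action. now rewrite k_q_zero, s_zero, !um_op_zero_l. Qed.

Lemma rp_action_zero_mid (x : X) (b : B) :
  rp_action x um_zero (q um_zero) b = q (um_op (k x) (s b)).
Proof. unfold rp_action. now rewrite k_q_zero, s_zero, um_op_zero_r, !um_op_zero_l. Qed.

Lemma rp_action_zero_r (x : X) (b : B) :
  rp_action x b (q um_zero) um_zero = q (um_op (k x) (s b)).
Proof. unfold rp_action. now rewrite k_q_zero, s_zero, !um_op_zero_r. Qed.

Lemma rp_action_zero_zero (b b' : B) :
  rp_action (q um_zero) b (q um_zero) b' = q um_zero.
Proof. unfold rp_action. now rewrite k_q_zero, !um_op_zero_l, <- s_op, q_s. Qed.

Lemma rp_action_decompose (x x' : X) (b b' : B) :
  rp_action x b x' b' =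
  rp_action (rp_action (rp_action x um_zero (q um_zero) b) b
                       (rp_action x' um_zero (q um_zero) b') b')
            um_zero (q um_zero) (um_op b b').
Proof.
  rewrite !rp_action_zero_mid.
  unfold rp_action at 2.
  rewrite !k_q_k_s.
  set (a := um_op (um_op (k x) (s b)) (um_op (k x') (s b'))).
  assert (p_a : p a = um_op b b') by (unfold a; now rewrite p_op, !p_k_s).
  rewrite <- p_a, k_q_s_p.
  reflexivity.
Qed.

Lemma rp_action_B_action : B_action B X rp_action.
Proof.
  exists (q um_zero); repeat split; intros.
  - now rewrite rp_action_zero_r, s_zero, um_op_zero_r, q_k.
  - now rewrite rp_action_zero_l, s_zero, um_op_zero_r, q_k.
  - now rewrite rp_action_zero_r, rp_action_zero_mid.
  - now rewrite rp_action_zero_mid, rp_action_zero_l.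
  - apply rp_action_zero_zero.
  - apply rp_action_decompose.
Qed.

End RetractionPointAction.

Theorem proposition5p1 (X : Type) (B A : UnitaryMagma)
  (k : X -> A) (q : A -> X) (s : B -> A) (p : A -> B) :
  retraction_point X B A k q s p ->
  B_action B X (fun x b x' b' => q (um_op (um_op (k x) (s b)) (um_op (k x') (s b')))).
Proof.
  intros [[s_op s_zero] [[p_op p_zero] [p_s [q_k [p_k [q_s k_q_s_p]]]]]].
  exact (rp_action_B_action X B A k q s p s_op s_zero p_op p_zero p_s q_k p_k q_s k_q_s_p).
Qed.
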